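(* Suppose there exists a subspace $\mathcal C\subseteq V$ of dimension $K$ with orthogonal projector $P$ that detects every error in $\mathcal E_\xi$ for each $\xi$ in a prescribed set $\mathcal S$ of irreducible types. Then there exist Hermitian matrices $A_\xi,B_\xi\in\mathbb C^{m_\xi\times m_\xi}$, for all types $\xi$ occurring in $\mathcal L(V)$, satisfying: $0\preceq A_\xi$ for all $\xi$; $A_\xi\preceq KB_\xi$ for all $\xi$; $\sum_\xi\mathrm{Tr}A_\xi=K$; $\sum_\xi\mathrm{Tr}B_\xi=K^2$; $\mathrm{vec}(B)=M\,\mathrm{vec}(A)$; and $A_\xi=KB_\xi$ for all $\xi\in\mathcal S$. One may take $A_\xi=A_\xi(P)$, $B_\xi=B_\xi(P)$. In particular, infeasibility of this semidefinite system certifies that no $K$-dimensional subspace of $V$ detects all errors in the sectors $\mathcal E_\xi$, $\xi\in\mathcal S$.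
   Context: Let $G$ be a group and $V$ a finite-dimensional complex Hilbert space with a unitary representation $\rho$ of $G$; $G$ acts on $\mathcal L(V)$ by conjugation, unitarily for $\langle X_1,X_2\rangle=\mathrm{Tr}(X_1^\dagger X_2)$. Let $\mathcal L(V)=\bigoplus_\xi\mathcal E_\xi$ be the isotypic decomposition, $m_\xi$ the multiplicity and $d_\xi$ the dimension of type $\xi$. Choose an orthogonal decomposition $\mathcal E_\xi=\bigoplus_{\alpha=1}^{m_\xi}\mathcal E_{\xi\alpha}$ into irreducibles, $G$-equivariant isometric isomorphisms $\phi^\xi_{1\alpha}:\mathcal E_{\xi1}\to\mathcal E_{\xi\alpha}$ ($\phi^\xi_{11}=\mathrm{id}$), an orthonormal basis $\{E_i^1\}_{i=1}^{d_\xi}$ of $\mathcal E_{\xi1}$, and put $E_i^\alpha=\phi^\xi_{1\alpha}(E_i^1)$. Projector matrix units $\Pi_{\xi\alpha\beta}(X)=\sum_i\langle E_i^\alpha,X\rangle E_i^\beta$; twirl matrix units $\mathrm{Twirl}_{\xi\alpha\beta}(X)=\sum_i(E_i^\alpha)^\dagger XE_i^\beta$. Matrix enumerators $[A_\xi(X)]_{\alpha\beta}=\langle X,\Pi_{\xi\alpha\beta}(X)\rangle$, $[B_\xi(X)]_{\alpha\beta}=\langle X,\mathrm{Twirl}_{\xi\alpha\beta}(X)\rangle$. The block MacWilliams matrix is $M_{(\xi,\alpha,\beta),(\rho,\mu,\nu)}=\frac1{d_\xi}\langle\!\langle\Pi_{\xi\alpha\beta},\mathrm{Twirl}_{\rho\mu\nu}\rangle\!\rangle$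 with $\langle\!\langle\mathcal S,\mathcal T\rangle\!\rangle=\mathrm{Tr}(\mathcal S^\dagger\mathcal T)$, and $\mathrm{vec}(B)=M\,\mathrm{vec}(A)$ means $[B_\rho]_{\mu\nu}=\sum_{\xi,\alpha,\beta}M_{(\xi,\alpha,\beta),(\rho,\mu,\nu)}[A_\xi]_{\alpha\beta}$ for all $\rho,\mu,\nu$. $\preceq$ is the Loewner order. A subspace with orthogonal projector $P$ detects every error in $\mathcal F\subseteq\mathcal L(V)$ if for every $E\in\mathcal F$ there is $c_E\in\mathbb C$ with $PEP=c_EP$. *)

From HB Require Import structures.
From mathcomp Require Import all_boot all_order all_algebra.
From mathcomp Require Import reals complex.
Set Implicit Arguments. Unset Strict Implicit. Unset Printing Implicit Defensive.
Import Order.TTheory GRing.Theory Num.Theory.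
Local Open Scope ring_scope.

Section Defs.
Variable R : realType.
Local Notation C := R[i].

Record group_on (G : Type) := GroupOn {
  gmul : G -> G -> G;
  gone : G;
  ginv : G -> G;
  gmulA : forall x y z, gmul x (gmul y z) = gmul (gmul x y) z;
  gmul1g : forall x, gmul gone x = x;
  gmulVg : forall x, gmul (ginv x) x = gone }.

Definition adj m n (X : 'M[C]_(m, n)) : 'M[C]_(n, m) := (map_mx Num.conj X)^T.

Definition hs n (X Y : 'M[C]_n) : C := \tr (adj X *m Y).

Definition unitary_rep n (G : Type) (gr : group_on G) (rho : G -> 'M[C]_n) :=
  rho (gone gr) = 1%:M /\
  (forall g h, rho (gmul gr g h) = rho g *m rho h) /\
  (forall g, rho g *m adj (rho g) = 1%:M).

Definition act n (G : Type) (rho : G -> 'M[C]_n) (g : G) (X : 'M[C]_n) :=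
  rho g *m X *m adj (rho g).

Definition herm_mx m (A : 'M[C]_m) := adj A = A.
Definition psd_mx m (A : 'M[C]_m) :=
  herm_mx A /\ forall v : 'cV[C]_m, 0 <= (adj v *m A *m v) 0 0.
Definition loewner_le m (A B : 'M[C]_m) := psd_mx (B - A).

Definition orth_projector n (P : 'M[C]_n) := adj P = P /\ P *m P = P.

(* ----- Decomposition data -----
   Xi : the irreducible types occurring in L(V);
   m xi : multiplicity, d xi : dimension;
   E xi a i = E_i^a for the type xi. *)
Variables (n : nat) (Xi : finType) (m d : Xi -> nat)
  (E : forall xi, 'I_(m xi) -> 'I_(d xi) -> 'M[C]_n).

Definition Eflat (k : {xi : Xi & ('I_(m xi) * 'I_(d xi))%type}) : 'M[C]_n :=
  E (tagged k).1 (tagged k).2.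

(* row-space (of vectorised matrices) of E_{xi alpha} *)
Definition Espan xi (a : 'I_(m xi)) : 'M[C]_(d xi, n * n) :=
  \matrix_(i < d xi) mxvec (E a i).

Definition g_invariant (G : Type) (rho : G -> 'M[C]_n) k (W : 'M[C]_(k, n * n)) :=
  forall g (v : 'rV[C]_(n * n)),
    (v <= W)%MS -> (mxvec (act rho g (vec_mx v)) <= W)%MS.

Definition irreducible_sub (G : Type) (rho : G -> 'M[C]_n) xi (a : 'I_(m xi)) :=
  Espan a != 0 /\
  forall k (W : 'M[C]_(k, n * n)), (W <= Espan a)%MS -> g_invariant rho W ->
    W = 0 \/ (Espan a <= W)%MS.

Definition Pimu xi (a b : 'I_(m xi)) (X : 'M[C]_n) : 'M[C]_n :=
  \sum_(i < d xi) hs (E a i) X *: E b i.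

Definition Twirl xi (a b : 'I_(m xi)) (X : 'M[C]_n) : 'M[C]_n :=
  \sum_(i < d xi) adj (E a i) *m X *m E b i.

Definition Aenum (X : 'M[C]_n) xi : 'M[C]_(m xi) :=
  \matrix_(a, b) hs X (Pimu a b X).
Definition Benum (X : 'M[C]_n) xi : 'M[C]_(m xi) :=
  \matrix_(a, b) hs X (Twirl a b X).

(* Hilbert-Schmidt inner product of superoperators, <<S,T>> = Tr(S^dagger T),
   computed in the orthonormal basis of matrix units of L(V). *)
Definition sdot (S T : 'M[C]_n -> 'M[C]_n) : C :=
  \sum_(i < n) \sum_(j < n) hs (S (delta_mx i j)) (T (delta_mx i j)).

Definition MacW xi (a b : 'I_(m xi)) rh (mu nu : 'I_(m rh)) : C :=
  (d xi)%:R^-1 * sdot (Pimu a b) (Twirl mu nu).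

Definition macwilliams_rel (A B : forall xi, 'M[C]_(m xi)) :=
  forall rh (mu nu : 'I_(m rh)),
    B rh mu nu = \sum_xi \sum_(a < m xi) \sum_(b < m xi) MacW a b mu nu * A xi a b.

Definition detects_sector (P : 'M[C]_n) xi :=
  forall c : 'I_(m xi) -> 'I_(d xi) -> C,
    exists cE : C,
      P *m (\sum_(a < m xi) \sum_(i < d xi) c a i *: E a i) *m P = cE *: P.

End Defs.

From HB Require Import structures.
From mathcomp Require Import all_boot all_order all_algebra.
From mathcomp Require Import reals complex.
From mathcomp Require Import ring.
Import Order.TTheory GRing.Theory Num.Theory.
Local Open Scope ring_scope.

Set Implicit Arguments. Unset Strict Implicit. Unset Printing Implicit Defensive.

(** For a projector [P] of rank [K], [A_xi(P)] and [B_xi(P)] are the blocks, on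
    the sectors of type [xi], of the rank-one superoperator [Y |-> <P,Y> P] and
    of the compression [Y |-> P Y P].  Positivity of [A] is then immediate, and
    [A <= K B] is the Cauchy-Schwarz inequality
    [<PYP,P> <P,PYP> <= <PYP,PYP> <P,P>] with [<P,P> = tr P = K]; detecting the
    errors of [E_xi] means that every [PYP] is a multiple of [P], which is the
    equality case.  The trace identities are the superoperator traces
    [<P,P> = K] and [tr P (tr P)^* = K^2].  Finally [Twirl_{rho mu nu}] commutes
    with the conjugation action, so by Schur's lemma its block between two
    irreducible copies is scalar, and zero between inequivalent types;
    expanding [P] in the basis [E] then gives [vec B = M vec A]. *)

Section HilbertSchmidt.
Variable R : realType.
Local Notation C := R[i].

Lemma adjmxE m n (X : 'M[C]_(m, n)) i j : adj X i j = (X j i)^*.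
Proof. by rewrite /adj !mxE. Qed.

Lemma adjmxK m n (X : 'M[C]_(m, n)) : adj (adj X) = X.
Proof. by apply/matrixP => i j; rewrite !adjmxE conjCK. Qed.

Lemma adjmxM m n p (X : 'M[C]_(m, n)) (Y : 'M[C]_(n, p)) :
  adj (X *m Y) = adj Y *m adj X.
Proof. by rewrite /adj map_mxM trmx_mul. Qed.

Lemma adjmxD m n (X Y : 'M[C]_(m, n)) : adj (X + Y) = adj X + adj Y.
Proof. by apply/matrixP => i j; rewrite !(adjmxE, mxE) rmorphD. Qed.

Lemma adjmxZ m n c (X : 'M[C]_(m, n)) : adj (c *: X) = c^* *: adj X.
Proof. by apply/matrixP => i j; rewrite !(adjmxE, mxE) rmorphM. Qed.

Lemma adjmxN m n (X : 'M[C]_(m, n)) : adj (- X) = - adj X.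
Proof. by apply/matrixP => i j; rewrite !(adjmxE, mxE) rmorphN. Qed.

Lemma adjmx_sum m n (I : finType) (F : I -> 'M[C]_(m, n)) :
  adj (\sum_i F i) = \sum_i adj (F i).
Proof.
apply/matrixP => p q; rewrite adjmxE !summxE rmorph_sum.
by apply: eq_bigr => i _; rewrite adjmxE.
Qed.

Lemma hsE n (X Y : 'M[C]_n) : hs X Y = \sum_p \sum_q (X p q)^* * Y p q.
Proof.
rewrite /hs /mxtrace; under eq_bigr do rewrite mxE.
rewrite exchange_big; apply: eq_bigr => p _.
by apply: eq_bigr => q _; rewrite adjmxE.
Qed.

Lemma hsC n (X Y : 'M[C]_n) : (hs X Y)^* = hs Y X.
Proof.
rewrite !hsE rmorph_sum; apply: eq_bigr => p _; rewrite rmorph_sum.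
by apply: eq_bigr => q _; rewrite rmorphM /= conjCK mulrC.
Qed.

Lemma hsDr n (X Y Z : 'M[C]_n) : hs X (Y + Z) = hs X Y + hs X Z.
Proof. by rewrite /hs mulmxDr mxtraceD. Qed.

Lemma hsZr n c (X Y : 'M[C]_n) : hs X (c *: Y) = c * hs X Y.
Proof. by rewrite /hs -scalemxAr mxtraceZ. Qed.

Lemma hs0r n (X : 'M[C]_n) : hs X 0 = 0.
Proof. by rewrite /hs mulmx0 mxtrace0. Qed.

Lemma hs_sumr n (I : finType) (X : 'M[C]_n) (F : I -> 'M[C]_n) :
  hs X (\sum_i F i) = \sum_i hs X (F i).
Proof. by rewrite /hs mulmx_sumr raddf_sum. Qed.

Lemma hsZl n c (X Y : 'M[C]_n) : hs (c *: X) Y = c^* * hs X Y.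
Proof. by rewrite -hsC hsZr rmorphM /= hsC. Qed.

Lemma hsDl n (X Y Z : 'M[C]_n) : hs (Y + Z) X = hs Y X + hs Z X.
Proof. by rewrite -hsC hsDr rmorphD /= !hsC. Qed.

Lemma hs_suml n (I : finType) (X : 'M[C]_n) (F : I -> 'M[C]_n) :
  hs (\sum_i F i) X = \sum_i hs (F i) X.
Proof. by rewrite -hsC hs_sumr rmorph_sum; apply: eq_bigr => i _; apply: hsC. Qed.

Lemma hs_delta n (X : 'M[C]_n) p q : hs (delta_mx p q) X = X p q.
Proof.
rewrite hsE (bigD1 p) //= [X in _ + X]big1 ?addr0; last first.
  move=> p' /negbTE p'p; apply: big1 => q' _.
  by rewrite mxE p'p /= rmorph0 mul0r.
rewrite (bigD1 q) //= [X in _ + X]big1 ?addr0; last first.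
  by move=> q' /negbTE q'q; rewrite mxE q'q andbF rmorph0 mul0r.
by rewrite mxE !eqxx rmorph1 mul1r.
Qed.

Lemma hs_ge0 n (X : 'M[C]_n) : 0 <= hs X X.
Proof.
rewrite hsE; apply: sumr_ge0 => p _; apply: sumr_ge0 => q _.
by rewrite mulrC mul_conjC_ge0.
Qed.

Lemma hs_eq0 n (X : 'M[C]_n) : hs X X = 0 -> X = 0.
Proof.
have sq_ge0 (x : C) : 0 <= x^* * x by rewrite mulrC mul_conjC_ge0.
rewrite hsE => sum0; apply/matrixP => p q.
have row_ge0 p' : 0 <= \sum_q (X p' q)^* * X p' q by apply: sumr_ge0.
have row0 : \sum_q (X p q)^* * X p q = 0.
  exact: psumr_eq0P (fun p' _ => row_ge0 p') sum0 p isT.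
have /eqP : (X p q)^* * X p q = 0.
  exact: psumr_eq0P (fun q' _ => sq_ge0 (X p q')) row0 q isT.
by rewrite mulrC mul_conjC_eq0 mxE => /eqP.
Qed.

Lemma hs_cauchy_schwarz n (X Y : 'M[C]_n) : hs X Y * hs Y X <= hs X X * hs Y Y.
Proof.
set a := hs Y Y; set b := hs Y X; set z := hs X X.
have a_real : a^* = a by rewrite /a hsC.
have bC : hs X Y = b^* by rewrite /b hsC.
rewrite bC.
have [a0|a_neq0] := eqVneq a 0.
  rewrite a0 mulr0 /b (hs_eq0 a0) -(scale0r (0 : 'M[C]_n)) hsZl rmorph0 /=.
  by rewrite mul0r rmorph0 mul0r.
have a_gt0 : 0 < a by rewrite lt_def a_neq0 hs_ge0.
have norm_comb : hs (a *: X - b *: Y) (a *: X - b *: Y) = a * (a * z - b^* * b).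
  rewrite [LHS]hsDl !hsDr -![in LHS]scaleNr !hsZl !hsZr a_real -/z -/a -/b bC.
  by rewrite rmorphN /=; ring.
have := hs_ge0 (a *: X - b *: Y).
by rewrite norm_comb pmulr_rge0 // subr_ge0 [z * _]mulrC.
Qed.

Lemma quad_formE k (A : 'M[C]_k) (v : 'cV[C]_k) :
  (adj v *m A *m v) 0 0 = \sum_a \sum_b (v a 0)^* * A a b * v b 0.
Proof.
rewrite mxE exchange_big; apply: eq_bigr => b _.
by rewrite mxE mulr_suml; apply: eq_bigr => a _; rewrite adjmxE.
Qed.

Lemma mx_quad_form_scaleB k c (A B : 'M[C]_k) (v : 'cV[C]_k) :
  (adj v *m (c *: B - A) *m v) 0 0 =
  c * (adj v *m B *m v) 0 0 - (adj v *m A *m v) 0 0.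
Proof. by rewrite mulmxBr mulmxBl -scalemxAr -scalemxAl !mxE. Qed.

End HilbertSchmidt.

Lemma mxtrace_idem (F : fieldType) n (P : 'M[F]_n) :
  P *m P = P -> \tr P = (\rank P)%:R.
Proof.
move=> PP; have P_fact := mulmx_base P.
have [B B_linv] := row_fullP (col_base_full P).
have [B' B'_rinv] := row_freeP (row_base_free P).
move: (col_base P) (row_base P) P_fact B_linv B'_rinv => Cb Rb P_fact B_linv B'_rinv.
have RbCb : Rb *m Cb = 1%:M.
  have -> : Rb *m Cb = B *m (Cb *m Rb) *m (Cb *m Rb) *m B'.
    by rewrite !mulmxA B_linv mul1mx -!mulmxA B'_rinv mulmx1.
  rewrite P_fact -(mulmxA B P P) PP.
  have -> : B *m P *m B' = B *m (Cb *m Rb) *m B' by rewrite P_fact.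
  by rewrite mulmxA B_linv mul1mx B'_rinv.
by rewrite -{1}P_fact mxtrace_mulC RbCb mxtrace1.
Qed.

Section Superoperators.
Variable R : realType.
Local Notation C := R[i].
Variable n : nat.

Definition rank1_op (X Y : 'M[C]_n) : 'M[C]_n := hs X Y *: X.

Definition sandwich (X Y : 'M[C]_n) : 'M[C]_n := X *m Y *m adj X.

Lemma rank1_op_is_linear X : linear (rank1_op X).
Proof. by move=> c Y Z; rewrite /rank1_op hsDr hsZr scalerDl scalerA. Qed.

HB.instance Definition _ X :=
  GRing.isLinear.Build C 'M[C]_n 'M[C]_n *:%R (rank1_op X) (rank1_op_is_linear X).

Lemma sandwich_is_linear X : linear (sandwich X).
Proof. by move=> c Y Z; rewrite /sandwich mulmxDr mulmxDl -scalemxAr -scalemxAl. Qed.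

HB.instance Definition _ X :=
  GRing.isLinear.Build C 'M[C]_n 'M[C]_n *:%R (sandwich X) (sandwich_is_linear X).

Lemma hs_rank1_op X Y Z : hs Y (rank1_op X Z) = hs Y X * hs X Z.
Proof. by rewrite hsZr mulrC. Qed.

Lemma hs_rank1_opC X Y Z : hs Y (rank1_op X Z) = hs (rank1_op X Y) Z.
Proof. by rewrite hs_rank1_op /rank1_op hsZl hsC. Qed.

Lemma hs_sandwich X Y Z : hs Y (sandwich X Z) = hs (sandwich (adj X) Y) Z.
Proof.
by rewrite /hs /sandwich !adjmxM !adjmxK !mulmxA [LHS]mxtrace_mulC !mulmxA.
Qed.

Lemma sandwich_delta_entry X p q x y :
  sandwich X (delta_mx p q) x y = X x p * (X y q)^*.
Proof.
rewrite mxE (bigD1 q) //= big1 ?addr0 => [|j /negbTE jq]; last first.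
  by rewrite mxE big1 ?mul0r // => k _; rewrite mxE jq andbF mulr0.
rewrite mxE (bigD1 p) //= big1 ?addr0 => [|k /negbTE kp]; last first.
  by rewrite mxE kp mulr0.
by rewrite mxE !eqxx mulr1 adjmxE.
Qed.

Lemma sum_hs_delta_sandwich X :
  \sum_p \sum_q hs (delta_mx p q) (sandwich X (delta_mx p q)) = \tr X * (\tr X)^*.
Proof.
rewrite /mxtrace rmorph_sum mulr_suml; apply: eq_bigr => p _.
rewrite mulr_sumr; apply: eq_bigr => q _.
by rewrite hs_delta sandwich_delta_entry.
Qed.

End Superoperators.

Section OrthonormalBasis.
Variable R : realType.
Local Notation C := R[i].
Variables (n : nat) (Xi : finType) (m d : Xi -> nat)
  (E : forall xi, 'I_(m xi) -> 'I_(d xi) -> 'M[C]_n).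
Local Notation Ef := (Eflat E).
Hypothesis E_orthonormal : forall k l, hs (Ef k) (Ef l) = (k == l)%:R.
Hypothesis E_spanning : forall X : 'M[C]_n, exists c, X = \sum_k c k *: Ef k.

Lemma sum_Eflat_index (F : {xi : Xi & ('I_(m xi) * 'I_(d xi))%type} -> C) :
  \sum_k F k = \sum_xi \sum_(a < m xi) \sum_(i < d xi) F (Tagged _ (a, i)).
Proof.
pose T xi := ('I_(m xi) * 'I_(d xi))%type.
transitivity (\sum_xi \sum_(p : T xi) F (Tagged T p)).
  rewrite (sig_big_dep xpredT (fun _ => xpredT) (fun xi (p : T xi) => F (Tagged T p))).
  by apply: eq_big => // -[].
by apply: eq_bigr => xi _; rewrite pair_big /=; apply: eq_bigr => -[].
Qed.

Lemma hsE_same_type xi (a b : 'I_(m xi)) (i j : 'I_(d xi)) :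
  hs (E a i) (E b j) = ((a == b) && (i == j))%:R.
Proof.
have := E_orthonormal (Tagged _ (a, i)) (Tagged (fun xi => ('I_(m xi) * 'I_(d xi))%type) (b, j)).
by rewrite /Eflat /= eq_Tagged.
Qed.

Lemma hs_basis_coord (X : 'M[C]_n) : X = \sum_k hs (Ef k) X *: Ef k.
Proof.
have [c ->] := E_spanning X; apply: eq_bigr => l _; congr (_ *: _).
rewrite hs_sumr (bigD1 l) //= hsZr E_orthonormal eqxx mulr1 big1 ?addr0 // => k kl.
by rewrite hsZr E_orthonormal eq_sym (negbTE kl) mulr0.
Qed.

Lemma parseval (X Y : 'M[C]_n) : hs X Y = \sum_k hs X (Ef k) * hs (Ef k) Y.
Proof.
by rewrite {1}(hs_basis_coord Y) hs_sumr; apply: eq_bigr => k _; rewrite hsZr mulrC.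
Qed.

Lemma superop_trace_basis (L : {linear 'M[C]_n -> 'M[C]_n}) :
  \sum_k hs (Ef k) (L (Ef k)) =
  \sum_p \sum_q hs (delta_mx p q) (L (delta_mx p q)).
Proof.
have hsEL k : hs (Ef k) (L (Ef k)) =
    \sum_p \sum_q hs (delta_mx p q) (Ef k) * hs (Ef k) (L (delta_mx p q)).
  rewrite {2}(matrix_sum_delta (Ef k)) linear_sum hs_sumr; apply: eq_bigr => p _.
  by rewrite linear_sum hs_sumr; apply: eq_bigr => q _; rewrite linearZ hsZr hs_delta.
rewrite (eq_bigr _ (fun k _ => hsEL k)) exchange_big; apply: eq_bigr => p _.
by rewrite exchange_big; apply: eq_bigr => q _; rewrite parseval.
Qed.

Definition sector_mx (L : 'M[C]_n -> 'M[C]_n) xi : 'M[C]_(m xi) :=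
  \matrix_(a, b) \sum_i hs (E a i) (L (E b i)).

Definition sector_elt xi (v : 'cV[C]_(m xi)) (i : 'I_(d xi)) : 'M[C]_n :=
  \sum_a v a 0 *: E a i.

Lemma sector_mx_quad_form (L : {linear 'M[C]_n -> 'M[C]_n}) xi (v : 'cV[C]_(m xi)) :
  (adj v *m sector_mx L xi *m v) 0 0 =
  \sum_i hs (sector_elt v i) (L (sector_elt v i)).
Proof.
rewrite quad_formE; symmetry.
transitivity (\sum_i \sum_a \sum_b (v a 0)^* * hs (E a i) (L (E b i)) * v b 0).
  apply: eq_bigr => i _; rewrite /sector_elt hs_suml; apply: eq_bigr => a _.
  rewrite hsZl linear_sum hs_sumr mulr_sumr; apply: eq_bigr => b _.
  by rewrite linearZ hsZr; ring.
rewrite exchange_big; apply: eq_bigr => a _; rewrite exchange_big.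
by apply: eq_bigr => b _; rewrite mxE mulr_sumr mulr_suml.
Qed.

Lemma sector_mx_herm (L : 'M[C]_n -> 'M[C]_n) xi :
  (forall X Y, hs X (L Y) = hs (L X) Y) -> herm_mx (sector_mx L xi).
Proof.
move=> L_selfadj; apply/matrixP => a b; rewrite adjmxE !mxE rmorph_sum /=.
by apply: eq_bigr => i _; rewrite hsC L_selfadj.
Qed.

Lemma sector_mx_psd (L : {linear 'M[C]_n -> 'M[C]_n}) xi :
  (forall X Y, hs X (L Y) = hs (L X) Y) -> (forall X, 0 <= hs X (L X)) ->
  psd_mx (sector_mx L xi).
Proof.
move=> L_selfadj L_ge0; split; first exact: sector_mx_herm.
by move=> v; rewrite sector_mx_quad_form; apply: sumr_ge0.
Qed.

Lemma sum_tr_sector_mx (L : 'M[C]_n -> 'M[C]_n) :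
  \sum_xi \tr (sector_mx L xi) = \sum_k hs (Ef k) (L (Ef k)).
Proof.
rewrite sum_Eflat_index; apply: eq_bigr => xi _; apply: eq_bigr => a _.
by rewrite mxE.
Qed.

End OrthonormalBasis.

Section Enumerators.
Variable R : realType.
Local Notation C := R[i].
Variables (n : nat) (Xi : finType) (m d : Xi -> nat)
  (E : forall xi, 'I_(m xi) -> 'I_(d xi) -> 'M[C]_n).
Hypothesis E_orthonormal : forall k l, hs (Eflat E k) (Eflat E l) = (k == l)%:R.
Hypothesis E_spanning : forall X : 'M[C]_n, exists c, X = \sum_k c k *: Eflat E k.

Lemma Aenum_sector X xi : Aenum E X xi = sector_mx E (rank1_op X) xi.
Proof.
apply/matrixP => a b; rewrite !mxE /Pimu hs_sumr; apply: eq_bigr => i _.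
by rewrite hsZr hs_rank1_op mulrC.
Qed.

Lemma Benum_sector X xi : Benum E X xi = sector_mx E (sandwich X) xi.
Proof.
apply/matrixP => a b; rewrite !mxE /Twirl hs_sumr; apply: eq_bigr => i _.
by rewrite /hs /sandwich mxtrace_mulC !mulmxA.
Qed.

Lemma Aenum_psd X xi : psd_mx (Aenum E X xi).
Proof.
rewrite Aenum_sector; apply: sector_mx_psd => [|Y]; first exact: hs_rank1_opC.
by rewrite hs_rank1_op -hsC mulrC mul_conjC_ge0.
Qed.

Lemma sum_tr_Aenum X : \sum_xi \tr (Aenum E X xi) = hs X X.
Proof.
under eq_bigr do rewrite Aenum_sector.
rewrite sum_tr_sector_mx (parseval E_orthonormal E_spanning).
by apply: eq_bigr => k _; rewrite hs_rank1_op mulrC.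
Qed.

Lemma sum_tr_Benum X : \sum_xi \tr (Benum E X xi) = \tr X * (\tr X)^*.
Proof.
under eq_bigr do rewrite Benum_sector.
by rewrite sum_tr_sector_mx (superop_trace_basis E_orthonormal E_spanning) sum_hs_delta_sandwich.
Qed.

Variable P : 'M[C]_n.
Hypothesis P_projector : orth_projector P.
Local Notation K := (\rank P)%:R.

Lemma sandwich_projector Y : sandwich P Y = P *m Y *m P.
Proof. by case: P_projector => P_adj _; rewrite /sandwich P_adj. Qed.

Lemma hs_sandwich_projectorC X Y : hs X (sandwich P Y) = hs (sandwich P X) Y.
Proof. by case: P_projector => P_adj _; rewrite hs_sandwich P_adj. Qed.

Lemma sandwich_projector_idem Y : sandwich P (sandwich P Y) = sandwich P Y.
Proof.
case: P_projector => _ PP.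
by rewrite !sandwich_projector !mulmxA PP -!mulmxA PP.
Qed.

Lemma hs_sandwich_projector X Y :
  hs X (sandwich P Y) = hs (sandwich P X) (sandwich P Y).
Proof. by rewrite -{1}sandwich_projector_idem hs_sandwich_projectorC. Qed.

Lemma hs_projector_r X : hs X P = hs (sandwich P X) P.
Proof.
have PPP : sandwich P P = P by case: P_projector => _ PP; rewrite sandwich_projector !PP.
by rewrite -{1}PPP hs_sandwich_projectorC.
Qed.

Lemma hs_projector_l X : hs P X = hs P (sandwich P X).
Proof. by rewrite -hsC hs_projector_r hsC. Qed.

Lemma tr_projector : \tr P = K.
Proof. by case: P_projector => _ PP; apply: mxtrace_idem. Qed.

Lemma hs_projector_rank : hs P P = K.
Proof. by case: P_projector => P_adj PP; rewrite /hs P_adj PP tr_projector. Qed.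

Lemma Benum_herm xi : herm_mx (Benum E P xi).
Proof. by rewrite Benum_sector; apply: sector_mx_herm; apply: hs_sandwich_projectorC. Qed.

Lemma Aenum_loewner xi : loewner_le (Aenum E P xi) (K *: Benum E P xi).
Proof.
split.
  have [A_herm _] := Aenum_psd P xi.
  by rewrite /herm_mx adjmxD adjmxN adjmxZ rmorph_nat A_herm Benum_herm.
move=> v; rewrite mx_quad_form_scaleB Aenum_sector Benum_sector.
rewrite !sector_mx_quad_form mulr_sumr -sumrB; apply: sumr_ge0 => i _.
rewrite subr_ge0 hs_rank1_op hs_sandwich_projector hs_projector_r hs_projector_l.
by rewrite -hs_projector_rank mulrC hs_cauchy_schwarz.
Qed.

Lemma sum_tr_Aenum_projector : \sum_xi \tr (Aenum E P xi) = K.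
Proof. by rewrite sum_tr_Aenum hs_projector_rank. Qed.

Lemma sum_tr_Benum_projector : \sum_xi \tr (Benum E P xi) = K ^+ 2.
Proof. by rewrite sum_tr_Benum tr_projector rmorph_nat expr2. Qed.

Lemma detects_sector_basis xi : detects_sector E P xi ->
  forall (a : 'I_(m xi)) (i : 'I_(d xi)), exists c, sandwich P (E a i) = c *: P.
Proof.
move=> P_detects a i.
have [c Pc] := P_detects (fun a' i' => ((a' == a) && (i' == i))%:R).
exists c; rewrite sandwich_projector -Pc; congr (_ *m _ *m _).
rewrite (bigD1 a) //= [X in _ + X]big1 ?addr0 => [|a' /negbTE a'a]; last first.
  by apply: big1 => i' _; rewrite a'a scale0r.
rewrite (bigD1 i) //= [X in _ + X]big1 ?addr0 => [|i' /negbTE i'i]; last first.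
  by rewrite i'i andbF scale0r.
by rewrite !eqxx scale1r.
Qed.

Lemma Aenum_detects xi : detects_sector E P xi -> Aenum E P xi = K *: Benum E P xi.
Proof.
move=> /detects_sector_basis PEP; apply/matrixP => a b.
rewrite Aenum_sector Benum_sector !mxE mulr_sumr; apply: eq_bigr => i _.
have [ca Pa] := PEP a i; have [cb Pb] := PEP b i.
rewrite hs_rank1_op [in RHS]hs_sandwich_projector hs_projector_r hs_projector_l.
by rewrite Pa Pb !hsZl !hsZr hs_projector_rank; ring.
Qed.

End Enumerators.

Section Representation.
Variable R : realType.
Local Notation C := R[i].
Variables (n : nat) (G : Type) (gr : group_on G) (rho : G -> 'M[C]_n)
  (Xi : finType) (m d : Xi -> nat)
  (E : forall xi, 'I_(m xi) -> 'I_(d xi) -> 'M[C]_n)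
  (D : forall xi, G -> 'M[C]_(d xi)).
Hypothesis rho_unitary : unitary_rep gr rho.
Hypothesis types_occur : forall xi, (0 < m xi)%N /\ (0 < d xi)%N.
Hypothesis E_orthonormal : forall k l, hs (Eflat E k) (Eflat E l) = (k == l)%:R.
Hypothesis E_spanning : forall X : 'M[C]_n, exists c, X = \sum_k c k *: Eflat E k.
Hypothesis E_irreducible : forall xi (a : 'I_(m xi)), irreducible_sub E rho a.
Hypothesis E_equivariant : forall xi g (a : 'I_(m xi)) (i : 'I_(d xi)),
  act rho g (E a i) = \sum_(j < d xi) D xi g j i *: E a j.
Hypothesis types_inequivalent : forall xi xi', xi != xi' ->
  forall T : 'M[C]_(d xi', d xi), (forall g, T *m D xi g = D xi' g *m T) -> T = 0.

Lemma rho_unitaryV g : adj (rho g) *m rho g = 1%:M.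
Proof. by apply: mulmx1C; case: rho_unitary => _ []. Qed.

Lemma act_is_linear g : linear (act rho g).
Proof. by move=> c X Y; rewrite /act mulmxDr mulmxDl -scalemxAr -scalemxAl. Qed.

HB.instance Definition _ g :=
  GRing.isLinear.Build C 'M[C]_n 'M[C]_n *:%R (act rho g) (act_is_linear g).

Lemma hs_act g (X Y : 'M[C]_n) : hs (act rho g X) (act rho g Y) = hs X Y.
Proof.
rewrite /hs /act !adjmxM adjmxK !mulmxA.
rewrite -[rho g *m adj X *m adj (rho g) *m rho g]mulmxA rho_unitaryV mulmx1.
by rewrite mxtrace_mulC !mulmxA rho_unitaryV mul1mx.
Qed.

Lemma act_mul g (X Y : 'M[C]_n) : act rho g (X *m Y) = act rho g X *m act rho g Y.
Proof.
by rewrite /act !mulmxA -[rho g *m X *m adj (rho g) *m rho g]mulmxA rho_unitaryV mulmx1.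
Qed.

Lemma act_adj g (X : 'M[C]_n) : act rho g (adj X) = adj (act rho g X).
Proof. by rewrite /act !adjmxM adjmxK mulmxA. Qed.

Lemma hs_sector_comb xi (a : 'I_(m xi)) (x y : 'I_(d xi) -> C) :
  hs (\sum_k x k *: E a k) (\sum_l y l *: E a l) = \sum_k (x k)^* * y k.
Proof.
rewrite hs_suml; apply: eq_bigr => k _; rewrite hsZl hs_sumr.
rewrite (bigD1 k) //= [X in _ + X]big1 ?addr0 => [|l /negbTE lk]; last first.
  by rewrite hsZr (hsE_same_type E_orthonormal) eqxx /= eq_sym lk mulr0.
by rewrite hsZr (hsE_same_type E_orthonormal) !eqxx mulr1.
Qed.

Lemma D_unitary xi g : adj (D xi g) *m D xi g = 1%:M.
Proof.
have [m_pos _] := types_occur xi; pose a : 'I_(m xi) := Ordinal m_pos.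
apply/matrixP => i j; rewrite !mxE; have := hs_act g (E a i) (E a j).
rewrite !E_equivariant hs_sector_comb (hsE_same_type E_orthonormal) eqxx /= => <-.
by apply: eq_bigr => k _; rewrite adjmxE.
Qed.

Lemma D_unitaryV xi g : D xi g *m adj (D xi g) = 1%:M.
Proof. exact/mulmx1C/D_unitary. Qed.

Lemma D_rows_orthonormal xi g (i k : 'I_(d xi)) :
  \sum_j (D xi g k j)^* * D xi g i j = (i == k)%:R.
Proof.
have := congr1 (fun M : 'M[C]_(d xi) => M i k) (D_unitaryV xi g).
by rewrite !mxE => <-; apply: eq_bigr => j _; rewrite adjmxE mulrC.
Qed.

Lemma mulmx_sum_sum (I J : finType) (x : I -> C) (y : J -> C)
    (A : I -> 'M[C]_n) (B : J -> 'M[C]_n) (X : 'M[C]_n) :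
  (\sum_k x k *: A k) *m X *m (\sum_l y l *: B l) =
  \sum_k \sum_l (x k * y l) *: (A k *m X *m B l).
Proof.
rewrite !mulmx_suml; apply: eq_bigr => k _; rewrite mulmx_sumr.
by apply: eq_bigr => l _; rewrite -!scalemxAl -scalemxAr scalerA.
Qed.

Lemma Twirl_is_linear rh (mu nu : 'I_(m rh)) : linear (Twirl E mu nu).
Proof.
move=> c X Y; rewrite /Twirl scaler_sumr -big_split; apply: eq_bigr => j _.
by rewrite mulmxDr mulmxDl -scalemxAr -scalemxAl.
Qed.

HB.instance Definition _ rh (mu nu : 'I_(m rh)) :=
  GRing.isLinear.Build C 'M[C]_n 'M[C]_n *:%R (Twirl E mu nu) (Twirl_is_linear mu nu).

Lemma Twirl_act rh (mu nu : 'I_(m rh)) g (X : 'M[C]_n) :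
  act rho g (Twirl E mu nu X) = Twirl E mu nu (act rho g X).
Proof.
rewrite /Twirl linear_sum /=.
under eq_bigr => j _ do rewrite !act_mul act_adj !E_equivariant adjmx_sum.
under eq_bigr => j _ do under eq_bigr => k _ do rewrite adjmxZ.
under eq_bigr => j _ do rewrite mulmx_sum_sum.
rewrite exchange_big; apply: eq_bigr => k _.
rewrite exchange_big /= (bigD1 k) //= [X in _ + X]big1 ?addr0 => [|l /negbTE lk].
  by rewrite -scaler_suml D_rows_orthonormal eqxx scale1r.
by rewrite -scaler_suml D_rows_orthonormal lk scale0r.
Qed.

Definition twirl_block xi xi' (a : 'I_(m xi)) (b : 'I_(m xi')) rh (mu nu : 'I_(m rh)) :
  'M[C]_(d xi', d xi) := \matrix_(i, i') hs (E b i) (Twirl E mu nu (E a i')).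

Lemma twirl_block_intertwines xi xi' (a : 'I_(m xi)) (b : 'I_(m xi'))
    rh (mu nu : 'I_(m rh)) g :
  twirl_block a b mu nu *m D xi g = D xi' g *m twirl_block a b mu nu.
Proof.
have conjD : twirl_block a b mu nu = adj (D xi' g) *m twirl_block a b mu nu *m D xi g.
  apply/matrixP => i i'.
  rewrite [LHS]mxE -(hs_act g) Twirl_act !E_equivariant linear_sum hs_suml.
  rewrite [RHS]mxE; under [RHS]eq_bigr => k _ do rewrite mxE mulr_suml.
  rewrite [RHS]exchange_big; apply: eq_bigr => j _.
  rewrite hsZl hs_sumr mulr_sumr; apply: eq_bigr => k _.
  by rewrite linearZ hsZr adjmxE !mxE; ring.
by rewrite {2}conjD !mulmxA D_unitaryV mul1mx.
Qed.

Lemma hs_Twirl_inequiv xi xi' (a : 'I_(m xi)) (b : 'I_(m xi'))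
    rh (mu nu : 'I_(m rh)) i i' :
  xi != xi' -> hs (E b i) (Twirl E mu nu (E a i')) = 0.
Proof.
move=> xi'xi; have := types_inequivalent xi'xi (twirl_block_intertwines a b mu nu).
by move/matrixP => /(_ i i'); rewrite !mxE.
Qed.

Lemma Espan_comb xi (a : 'I_(m xi)) (r : 'rV[C]_(d xi)) :
  vec_mx (r *m Espan E a) = \sum_i r 0 i *: E a i.
Proof.
rewrite mulmx_sum_row linear_sum; apply: eq_bigr => i _.
by rewrite linearZ /= /Espan rowK mxvecK.
Qed.

Lemma hs_Espan_comb xi (a : 'I_(m xi)) (r : 'rV[C]_(d xi)) j :
  hs (E a j) (vec_mx (r *m Espan E a)) = r 0 j.
Proof.
rewrite Espan_comb hs_sumr (bigD1 j) //= [X in _ + X]big1 ?addr0 => [|i /negbTE ij].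
  by rewrite hsZr (hsE_same_type E_orthonormal) !eqxx mulr1.
by rewrite hsZr (hsE_same_type E_orthonormal) eqxx /= eq_sym ij mulr0.
Qed.

Lemma act_Espan_comb xi (a : 'I_(m xi)) g (r : 'rV[C]_(d xi)) :
  act rho g (vec_mx (r *m Espan E a)) = vec_mx (r *m (D xi g)^T *m Espan E a).
Proof.
rewrite !Espan_comb linear_sum /=.
under eq_bigr => i _ do rewrite linearZ /= E_equivariant scaler_sumr.
rewrite exchange_big; apply: eq_bigr => j _.
rewrite !mxE scaler_suml; apply: eq_bigr => i _.
by rewrite scalerA mxE.
Qed.

(* Schur's lemma: an eigenspace of [M^T] spans a [G]-invariant subspace of
   the irreducible [E_xi,a], hence all of it. *)
Lemma schur_scalar xi (M : 'M[C]_(d xi)) :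
  (forall g, M *m D xi g = D xi g *m M) -> exists l, M = l%:M.
Proof.
move=> M_comm; have [m_pos d_pos] := types_occur xi.
pose a : 'I_(m xi) := Ordinal m_pos.
have /closed_rootP [l Ml] : size (char_poly M^T) != 1.
  by rewrite size_char_poly; case: (d xi) d_pos.
have l_eigen : eigenvalue M^T l by rewrite eigenvalue_root_char.
set N := eigenspace M^T l.
have N_inv (r : 'rV[C]_(d xi)) g : (r <= N)%MS -> (r *m (D xi g)^T <= N)%MS.
  move=> /sub_kermxP rN; apply/sub_kermxP.
  have DM : (D xi g)^T *m (M^T - l%:M) = (M^T - l%:M) *m (D xi g)^T.
    by rewrite mulmxBr mulmxBl -!trmx_mul M_comm scalar_mxC.
  by rewrite -mulmxA DM mulmxA rN mul0mx.
have W_inv : g_invariant rho (N *m Espan E a).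
  move=> g v /submxP [x ->]; rewrite mulmxA act_Espan_comb vec_mxK.
  by apply/submxMr/N_inv/submxMl.
have [_ E_irr] := E_irreducible a.
case: (E_irr _ _ (submxMl _ _) W_inv) => [W0|W_full].
  move: l_eigen; rewrite /eigenvalue -/N => /negP; case.
  apply/eqP/row_matrixP => i; apply/rowP => j.
  by rewrite -(hs_Espan_comb a) -row_mul W0 row0 linear0 hs0r !mxE.
have one_N : (1%:M <= N)%MS.
  apply/row_subP => j; have /submxP [x Ex] := submx_trans (row_sub j (Espan E a)) W_full.
  suff -> : row j (1%:M : 'M[C]_(d xi)) = x *m N by apply: submxMl.
  apply/rowP => k; rewrite -[(x *m N) 0 k](hs_Espan_comb a) -mulmxA -Ex /Espan rowK mxvecK.
  by rewrite (hsE_same_type E_orthonormal) eqxx !mxE eq_sym.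
move/sub_kermxP: one_N; rewrite mul1mx => /eqP; rewrite subr_eq0 => /eqP MTl.
by exists l; rewrite -(trmxK M) MTl tr_scalar_mx.
Qed.

Definition twirl_coef xi (a b : 'I_(m xi)) rh (mu nu : 'I_(m rh)) : C :=
  (d xi)%:R^-1 * \sum_j hs (E b j) (Twirl E mu nu (E a j)).

Lemma hs_Twirl_same_type xi (a b : 'I_(m xi)) rh (mu nu : 'I_(m rh)) i i' :
  hs (E b i) (Twirl E mu nu (E a i')) = (i == i')%:R * twirl_coef a b mu nu.
Proof.
have [l Tl] := schur_scalar (twirl_block_intertwines a b mu nu).
have Tl_entry j j' : hs (E b j) (Twirl E mu nu (E a j')) = l * (j == j')%:R.
  by have := congr1 (fun M : 'M[C]_(d xi) => M j j') Tl; rewrite !mxE mulr_natr.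
have d_neq0 : (d xi)%:R != 0 :> C by rewrite pnatr_eq0 -lt0n; case: (types_occur xi).
suff -> : twirl_coef a b mu nu = l by rewrite Tl_entry mulrC.
rewrite /twirl_coef (eq_bigr (fun _ => l)) => [|j _]; last by rewrite Tl_entry eqxx mulr1.
by rewrite sumr_const card_ord -[l *+ _]mulr_natl mulrA mulVf // mul1r.
Qed.

Lemma sdot_Pimu_Twirl xi (a b : 'I_(m xi)) rh (mu nu : 'I_(m rh)) :
  sdot (Pimu E a b) (Twirl E mu nu) = \sum_i hs (E b i) (Twirl E mu nu (E a i)).
Proof.
have expand_delta i : hs (E b i) (Twirl E mu nu (E a i)) =
    \sum_p \sum_q (E a i) p q * hs (E b i) (Twirl E mu nu (delta_mx p q)).
  rewrite {1}(matrix_sum_delta (E a i)) linear_sum hs_sumr; apply: eq_bigr => p _.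
  by rewrite linear_sum hs_sumr; apply: eq_bigr => q _; rewrite linearZ hsZr.
rewrite /sdot (eq_bigr _ (fun i _ => expand_delta i)) [RHS]exchange_big.
apply: eq_bigr => p _; rewrite [RHS]exchange_big; apply: eq_bigr => q _.
by rewrite /Pimu hs_suml; apply: eq_bigr => i _; rewrite hsZl hsC hs_delta.
Qed.

Lemma macwilliams_enum (P : 'M[C]_n) : macwilliams_rel E (Aenum E P) (Benum E P).
Proof.
move=> rh mu nu.
have hs_Twirl_P xi' (b : 'I_(m xi')) i :
    hs (E b i) (Twirl E mu nu P) = \sum_a hs (E a i) P * twirl_coef a b mu nu.
  rewrite {1}(hs_basis_coord E_orthonormal E_spanning P) linear_sum hs_sumr.
  rewrite sum_Eflat_index (bigD1 xi') //= [X in _ + X]big1 ?addr0 => [|xi xixi'].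
    apply: eq_bigr => a _; rewrite (bigD1 i) //= [X in _ + X]big1 ?addr0.
      by rewrite linearZ hsZr hs_Twirl_same_type eqxx mul1r.
    move=> i' /negbTE i'i.
    by rewrite linearZ hsZr hs_Twirl_same_type eq_sym i'i mul0r mulr0.
  apply: big1 => a _; apply: big1 => i' _.
  by rewrite linearZ hsZr hs_Twirl_inequiv ?mulr0.
rewrite mxE (parseval E_orthonormal E_spanning) sum_Eflat_index; apply: eq_bigr => xi _.
under eq_bigr => b _ do under eq_bigr => i _ do rewrite /Eflat /= hs_Twirl_P mulr_sumr.
have MacW_coef (a b : 'I_(m xi)) : MacW E a b mu nu = twirl_coef a b mu nu.
  by rewrite /MacW sdot_Pimu_Twirl.
under [RHS]eq_bigr => a _ do under eq_bigr => b _ do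
  rewrite MacW_coef mxE /Pimu hs_sumr mulr_sumr.
under eq_bigr => b _ do rewrite exchange_big.
rewrite exchange_big; apply: eq_bigr => a _; apply: eq_bigr => b _.
by apply: eq_bigr => i _; rewrite hsZr /=; ring.
Qed.

End Representation.

Unset Implicit Arguments.

Theorem mainTheorem19
  (R : realType) (n : nat)
  (G : Type) (gr : group_on G) (rho : G -> 'M[R[i]]_n)
  (Xi : finType) (m d : Xi -> nat)
  (E : forall xi, 'I_(m xi) -> 'I_(d xi) -> 'M[R[i]]_n)
  (D : forall xi, G -> 'M[R[i]]_(d xi))
  (S : {set Xi}) (K : nat) (P : 'M[R[i]]_n) :
  unitary_rep gr rho ->
  (forall xi, (0 < m xi)%N /\ (0 < d xi)%N) ->
  (forall k l, hs (Eflat E k) (Eflat E l) = (k == l)%:R) ->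
  (forall X : 'M[R[i]]_n, exists c, X = \sum_k c k *: Eflat E k) ->
  (forall xi (a : 'I_(m xi)), irreducible_sub E rho a) ->
  (* equivariance: in the bases E^alpha, G acts on every E_{xi alpha} by the
     same matrices D xi g (i.e. the maps E_i^1 |-> E_i^alpha are
     G-equivariant isometries) *)
  (forall xi g (a : 'I_(m xi)) (i : 'I_(d xi)),
      act rho g (E xi a i) = \sum_(j < d xi) D xi g j i *: E xi a j) ->
  (forall xi xi', xi != xi' -> forall T : 'M[R[i]]_(d xi', d xi),
      (forall g, T *m D xi g = D xi' g *m T) -> T = 0) ->
  orth_projector P -> \rank P = K ->
  (forall xi, xi \in S -> detects_sector E P xi) ->
  exists (A B : forall xi, 'M[R[i]]_(m xi)),
    [/\ A = Aenum E P /\ B = Benum E P,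
        (forall xi, herm_mx (A xi) /\ herm_mx (B xi)),
        (forall xi, psd_mx (A xi)),
        (forall xi, loewner_le (A xi) (K%:R *: B xi)) &
        [/\ \sum_xi \tr (A xi) = K%:R,
            \sum_xi \tr (B xi) = K%:R ^+ 2,
            macwilliams_rel E A B &
            (forall xi, xi \in S -> A xi = K%:R *: B xi)]].
Proof.
move=> rho_unitary types_occur E_orthonormal E_spanning E_irreducible E_equivariant
  types_inequivalent P_projector <- P_detects.
exists (Aenum E P), (Benum E P); split => //.
- by move=> xi; split; [case: (Aenum_psd E P xi) | apply: Benum_herm].
- by move=> xi; apply: Aenum_psd.
- by move=> xi; apply: Aenum_loewner.
- split.
  + exact: sum_tr_Aenum_projector.
  + exact: sum_tr_Benum_projector.
  + exact: macwilliams_enum rho_unitary types_occur E_orthonormal E_spanning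
      E_irreducible E_equivariant types_inequivalent P.
  + by move=> xi /P_detects; apply: Aenum_detects.
Qed.
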